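(* Let $H$ be a finite-dimensional complex Hilbert space, $A$ a unital (real or complex) $*$-subalgebra of $\mathrm{End}_{\mathbb{C}}(H)$, $D$ a selfadjoint operator on $H$, and $J$ an antilinear isometry of $H$ with $J^2=\varepsilon 1$, $JD=\varepsilon' DJ$ for some $\varepsilon,\varepsilon'\in\{\pm1\}$, such that $[a,JbJ^{-1}]=0$ for all $a,b\in A$. With $D_1,D_2,D_R$ as defined in the context, $D$ satisfies the first order condition $[[D,a],JbJ^{-1}]=0$ for all $a,b\in A$ if and only if: $D_2=0$, $D_1$ commutes with every element of $A$, and $D_R$ satisfies the first order condition, i.e. $[[D_R,a],JbJ^{-1}]=0$ for all $a,b\in A$.
   Context: Let $A_{\mathbb{C}}$ be the complex $*$-subalgebra of $\mathrm{End}_{\mathbb{C}}(H)$ generated by $A$; write $A_{\mathbb{C}}\cong\bigoplus_{i=1}^N M_{n_i}(\mathbb{C})$ and let $P_1,\dots,P_N$ be the (orthogonal projections representing the) units of the summands, so $\sum_iP_i=1$. Set $Q_j=JP_jJ^{-1}$ and $D_{ij,kl}=P_iQ_jDP_kQ_l$. Define $D_0=\sum_{i,j,k:\,i\neq k}D_{ij,kj}$, $D_1=\sum_{i,j,l:\,j\neq l}D_{ij,il}$, $D_2=\sum_{i,j,k,l:\,i\neq k,\,j\neq l}D_{ij,kl}$, $D_R=\sum_{i,j}D_{ij,ij}$, so $D=D_0+D_1+D_2+D_R$. *)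

From HB Require Import structures.
From mathcomp Require Import all_boot all_order all_algebra complex.
From mathcomp Require Import reals.
Set Implicit Arguments. Unset Strict Implicit. Unset Printing Implicit Defensive.
Import Order.TTheory GRing.Theory Num.Theory.
Local Open Scope ring_scope.

(* H = C^n (column vectors) with the standard inner product <u,v> = u^* v,
   C = R[i] the complex numbers over a real field R : realType. *)

Section Defs.
Variable R : realType.
Local Notation C := (R[i]).

Definition adj m n (M : 'M[C]_(m, n)) : 'M[C]_(n, m) := (map_mx Num.conj M)^T.

Definition comm n (X Y : 'M[C]_n) : 'M[C]_n := X *m Y - Y *m X.

Definition inner n (u v : 'cV[C]_n) : C := (adj u *m v) 0 0.

Definition antilinear_isometry n (J : 'cV[C]_n -> 'cV[C]_n) : Prop :=
  (forall u v, J (u + v) = J u + J v) /\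
  (forall (c : C) v, J (c *: v) = Num.conj c *: J v) /\
  (forall v, inner (J v) (J v) = inner v v).

Definition mx_of n (f : 'cV[C]_n -> 'cV[C]_n) : 'M[C]_n :=
  \matrix_(i, j) f (delta_mx j 0) i 0.

Definition Jconj n (J Jinv : 'cV[C]_n -> 'cV[C]_n) (M : 'M[C]_n) : 'M[C]_n :=
  mx_of (fun v => J (M *m Jinv v)).

(* A is a unital real *-subalgebra of End_C(H) (a complex *-subalgebra is in
   particular a real one) *)
Definition unital_real_star_subalgebra n (A : 'M[C]_n -> Prop) : Prop :=
  A 1%:M /\ A 0 /\
  (forall a b, A a -> A b -> A (a + b)) /\
  (forall a b, A a -> A b -> A (a *m b)) /\
  (forall (c : C) a, c \is Num.real -> A a -> A (c *: a)) /\
  (forall a, A a -> A (adj a)).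

Definition unital_complex_star_subalgebra n (S : 'M[C]_n -> Prop) : Prop :=
  S 1%:M /\ S 0 /\
  (forall a b, S a -> S b -> S (a + b)) /\
  (forall a b, S a -> S b -> S (a *m b)) /\
  (forall (c : C) a, S a -> S (c *: a)) /\
  (forall a, S a -> S (adj a)).

Definition complexification n (A : 'M[C]_n -> Prop) (M : 'M[C]_n) : Prop :=
  forall S : 'M[C]_n -> Prop, unital_complex_star_subalgebra S ->
    (forall a, A a -> S a) -> S M.

(* P_1..P_N are the units of the simple summands of A_C = (+)_i M_{n_i}(C):
   nonzero orthogonal projections in the center of A_C, mutually orthogonal,
   summing to 1, and each summand P_i A_C has trivial center (hence is a full
   matrix algebra). *)
Definition summand_units n (A : 'M[C]_n -> Prop) N (P : 'I_N -> 'M[C]_n) : Prop :=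
  (forall i, complexification A (P i)) /\
  (forall i, adj (P i) = P i) /\
  (forall i j, P i *m P j = if i == j then P i else 0) /\
  (forall i, P i != 0) /\
  (\sum_(i < N) P i = 1%:M) /\
  (forall i x, complexification A x -> P i *m x = x *m P i) /\
  (forall i z, complexification A z ->
     (forall x, complexification A x -> z *m x = x *m z) ->
     exists c : C, P i *m z = c *: P i).

Definition Dblock n N (P : 'I_N -> 'M[C]_n) (J Jinv : 'cV[C]_n -> 'cV[C]_n)
  (D : 'M[C]_n) (i j k l : 'I_N) : 'M[C]_n :=
  P i *m Jconj J Jinv (P j) *m D *m P k *m Jconj J Jinv (P l).

Definition D_1 n N P J Jinv D : 'M[C]_n :=
  \sum_(i < N) \sum_(j < N) \sum_(l < N | j != l) @Dblock n N P J Jinv D i j i l.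

Definition D_2 n N P J Jinv D : 'M[C]_n :=
  \sum_(i < N) \sum_(j < N) \sum_(k < N | i != k) \sum_(l < N | j != l)
     @Dblock n N P J Jinv D i j k l.

Definition D_R n N P J Jinv D : 'M[C]_n :=
  \sum_(i < N) \sum_(j < N) @Dblock n N P J Jinv D i j i j.

Definition first_order n (A : 'M[C]_n -> Prop) (J Jinv : 'cV[C]_n -> 'cV[C]_n)
  (X : 'M[C]_n) : Prop :=
  forall a b, A a -> A b -> comm (comm X a) (Jconj J Jinv b) = 0.

End Defs.

From mathcomp Require Import all_boot all_order all_algebra complex.
From mathcomp Require Import reals.
Import GRing.Theory Num.Theory.
Set Implicit Arguments. Unset Strict Implicit. Unset Printing Implicit Defensive.
Local Open Scope ring_scope.

(* Write Q_j = J P_j J^-1.  The P_i are central in A_C and the order zero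
   condition, extended from A to A_C by sesquilinearity, makes A_C commute with
   J A_C J^-1; so the P_i and the Q_j are two commuting partitions of unity, and
   expanding D = (sum P_i)(sum Q_j) D (sum P_k)(sum Q_l) gives
   D = D_R + D_0 + D_1 + D_2.  For i <> k and j <> l the block D_ij,kl equals
   P_i Q_j [[D, P_k], Q_l] P_k Q_l, and for j <> l the commutator [D_ij,il, a]
   equals P_i Q_j [[D, a], Q_l] P_i Q_l; hence the first order condition forces
   D_2 = 0 and [D_1, a] = 0.  Conversely, conjugation by J maps D_1 onto
   eps' D_0, so if D_1 commutes with A then D_0 commutes with J A J^-1.  Then
   D_1 and D_0 satisfy the first order condition for trivial reasons, and since
   the condition is additive it holds for D iff it holds for D_R. *)

Section ProjectionBlocks.
Variable T : pzRingType.

Lemma commutator2_left_annihilated (l r d x y : T) : l * y = 0 ->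
  l * ((d * x - x * d) * y - y * (d * x - x * d)) * r =
  l * (d * x - x * d) * y * r.
Proof.
by move=> ly; rewrite mulrBr mulrA [l * (y * _)]mulrA ly mul0r subr0.
Qed.

Lemma offdiag_block (p p' q q' d : T) :
  p * p' = 0 -> q * q' = 0 -> p' * p' = p' -> q' * q' = q' ->
  GRing.comm q p' -> GRing.comm q' p' ->
  p * q * d * p' * q' =
  p * q * ((d * p' - p' * d) * q' - q' * (d * p' - p' * d)) * p' * q'.
Proof.
move=> pp' qq' p'p' q'q' qp' q'p'.
have pqq' : p * q * q' = 0 by rewrite -mulrA qq' mulr0.
have pqp' : p * q * p' = 0 by rewrite -mulrA qp' mulrA pp' mul0r.
have ee : p' * q' * (p' * q') = p' * q'.
  by rewrite mulrA -(mulrA p') q'p' mulrA p'p' -mulrA q'q'.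
rewrite -!(mulrA _ p' q') commutator2_left_annihilated // mulrBr.
rewrite [p * q * (p' * d)]mulrA pqp' mul0r subr0 [p * q * (d * p')]mulrA.
by rewrite -(mulrA _ p' q') -[in RHS]mulrA ee.
Qed.

Lemma diag_block_commutator (p q q' d a : T) :
  q * q' = 0 -> q' * q' = q' -> GRing.comm q' p ->
  GRing.comm a p -> GRing.comm a q -> GRing.comm a q' ->
  p * q * d * p * q' * a - a * (p * q * d * p * q') =
  p * q * ((d * a - a * d) * q' - q' * (d * a - a * d)) * p * q'.
Proof.
move=> qq' q'q' q'p ap aq aq'.
have pqq' : p * q * q' = 0 by rewrite -mulrA qq' mulr0.
have q'e : q' * (p * q') = p * q' by rewrite mulrA q'p -mulrA q'q'.
have ae : GRing.comm a (p * q') by apply: commrM.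
have apq : a * (p * q) = p * q * a by rewrite mulrA ap -mulrA aq mulrA.
rewrite -!(mulrA _ p q') commutator2_left_annihilated // mulrBr !mulrBl.
rewrite [p * q * (d * a)]mulrA [p * q * (a * d)]mulrA -apq.
by rewrite -!(mulrA _ q' (p * q')) q'e -(mulrA _ a) ae !mulrA.
Qed.

Lemma sum_blocks (I : finType) (p q : I -> T) (d : T) :
  \sum_i p i = 1 -> \sum_j q j = 1 ->
  \sum_i \sum_j \sum_k \sum_l p i * q j * d * p k * q l = d.
Proof.
move=> psum qsum.
have right x : \sum_k \sum_l x * p k * q l = x.
  under eq_bigr do rewrite -mulr_sumr qsum mulr1.
  by rewrite -mulr_sumr psum mulr1.
under eq_bigr do under eq_bigr do rewrite right.
under eq_bigr do rewrite -mulr_suml -mulr_sumr qsum mulr1.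
by rewrite -mulr_suml psum mul1r.
Qed.

End ProjectionBlocks.

Lemma sum_pair_D1 (V : nmodType) (I : finType) (F : I -> I -> V) i j :
  \sum_k \sum_l F k l =
  F i j + \sum_(k | i != k) F k j + \sum_(l | j != l) F i l
  + \sum_(k | i != k) \sum_(l | j != l) F k l.
Proof.
have split1 (G : I -> V) a : \sum_k G k = G a + \sum_(k | a != k) G k.
  by rewrite (bigD1 a) //=; congr (_ + _); apply: eq_bigl => k; rewrite eq_sym.
rewrite (split1 _ i) (split1 _ j) (eq_bigr _ (fun k _ => split1 _ j)).
by rewrite big_split /= addrACA !addrA.
Qed.

Lemma mulmx_cV_ext (T : pzSemiRingType) m n (X Y : 'M[T]_(m, n)) :
  (forall v : 'cV_n, X *m v = Y *m v) -> X = Y.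
Proof.
move=> XY; apply/matrixP => i j.
have := congr1 (fun v : 'cV_m => v i 0) (XY (delta_mx j 0)).
by rewrite -!colE !mxE.
Qed.

Section Commutator.
Variables (R : realType) (n : nat).
Implicit Types (c : R[i]) (X Y Z : 'M[R[i]]_n).

Lemma commE X Y : comm X Y = X * Y - Y * X.
Proof. by rewrite /comm mulmxE. Qed.

Lemma commP X Y : comm X Y = 0 <-> GRing.comm X Y.
Proof. by rewrite commE; split=> [/subr0_eq | ->] //; rewrite subrr. Qed.

Lemma commDl X Y Z : comm (X + Y) Z = comm X Z + comm Y Z.
Proof. by rewrite !commE mulrDl mulrDr opprD addrACA. Qed.

Lemma scalerAl_mx c X Y : c *: (X * Y) = c *: X * Y.
Proof. by rewrite -mulmxE scalemxAl. Qed.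

Lemma scalerAr_mx c X Y : c *: (X * Y) = X * (c *: Y).
Proof. by rewrite -mulmxE scalemxAr. Qed.

Lemma comm_linearl c X Y Z : comm (c *: X + Y) Z = c *: comm X Z + comm Y Z.
Proof.
rewrite !commE mulrDl mulrDr -scalerAl_mx -scalerAr_mx scalerBr.
by rewrite opprD addrACA.
Qed.

Lemma comm_linearr c X Y Z : comm Z (c *: X + Y) = c *: comm Z X + comm Z Y.
Proof.
rewrite !commE mulrDl mulrDr -scalerAl_mx -scalerAr_mx scalerBr.
by rewrite opprD addrACA.
Qed.

End Commutator.

Lemma first_order_addr (R : realType) n (A : 'M[R[i]]_n -> Prop) J Jinv X Y :
  first_order A J Jinv Y ->
  first_order A J Jinv (X + Y) <-> first_order A J Jinv X.
Proof.
move=> FOY; have FOD (a c : 'M[R[i]]_n) :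
    comm (comm (X + Y) a) c = comm (comm X a) c + comm (comm Y a) c.
  by rewrite (commDl X) commDl.
by split=> FO a b Aa Ab; have := FO a b Aa Ab; rewrite FOD FOY // addr0.
Qed.

Lemma first_order_commute (R : realType) n (A : 'M[R[i]]_n -> Prop) J Jinv X :
  (forall a, A a -> comm X a = 0) -> first_order A J Jinv X.
Proof.
by move=> Xc a b Aa Ab; apply/commP; rewrite Xc //; apply/commr_sym/commr0.
Qed.

Lemma mx_ofE (R : realType) n (f : 'cV[R[i]]_n -> 'cV[R[i]]_n) :
  (forall u v, f (u + v) = f u + f v) -> (forall c v, f (c *: v) = c *: f v) ->
  forall v, mx_of f *m v = f v.
Proof.
move=> fD fZ v.
have f0 : f 0 = 0 by rewrite -(scale0r 0) fZ !scale0r.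
have f_sum I r (Pr : pred I) F :
    f (\sum_(i <- r | Pr i) F i) = \sum_(i <- r | Pr i) f (F i).
  exact: (big_morph f fD f0).
rewrite {2}(matrix_sum_delta v) f_sum; apply/matrixP => i k.
rewrite (ord1 k) !mxE summxE; apply: eq_bigr => j _.
by rewrite f_sum big_ord1 fZ !mxE mulrC.
Qed.

Section Complexification.
Variables (R : realType) (n : nat) (A : 'M[R[i]]_n -> Prop).
Hypothesis HA : unital_real_star_subalgebra A.

Lemma complexification_sub a : A a -> complexification A a.
Proof. by move=> Aa S _; apply. Qed.

Definition complex_span (x : 'M[R[i]]_n) :=
  exists a1 a2, [/\ A a1, A a2 & x = a1 + 'i *: a2].

Lemma complex_span_real a : A a -> complex_span a.
Proof. by have [_ [A0 _]] := HA; exists a, 0; rewrite scaler0 addr0. Qed.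

Lemma complex_span_subalgebra : unital_complex_star_subalgebra complex_span.
Proof.
have [A1 [A0 [AD [AM [AZ Aadj]]]]] := HA.
have AN a : A a -> A (- a).
  by move=> Aa; rewrite -scaleN1r; apply: AZ => //; rewrite rpredN rpred1.
have AB a b : A a -> A b -> A (a - b) by move=> Aa Ab; apply/AD/AN.
do 2 (split; first exact: complex_span_real).
split; [|split; [|split]].
- move=> _ _ [a1 [a2 [Aa1 Aa2 ->]]] [b1 [b2 [Ab1 Ab2 ->]]].
  exists (a1 + b1), (a2 + b2); split; [exact: AD | exact: AD |].
  by rewrite scalerDr addrACA.
- move=> _ _ [a1 [a2 [Aa1 Aa2 ->]]] [b1 [b2 [Ab1 Ab2 ->]]].
  exists (a1 *m b1 - a2 *m b2), (a1 *m b2 + a2 *m b1).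
  split; [by apply: AB; apply: AM | by apply: AD; apply: AM |].
  rewrite mulmxDl !mulmxDr -!scalemxAl -!scalemxAr scalerA mulCii scaleN1r.
  by rewrite scalerDr [RHS]addrACA (addrC (- (a2 *m b2))).
- move=> c _ [a1 [a2 [Aa1 Aa2 ->]]].
  have Ar (r : R[i]) a : r \is Num.real -> A a -> A (r *: a) by apply: AZ.
  exists ('Re c *: a1 - 'Im c *: a2), ('Im c *: a1 + 'Re c *: a2).
  split; [by apply: AB; apply: Ar | by apply: AD; apply: Ar |].
  rewrite {1}(Crect c) scalerDr !scalerDl !scalerA scalerDr !scalerA.
  rewrite (mulrAC 'i) mulCii mulN1r scaleNr (mulrC ('Re c)) [RHS]addrACA.
  by rewrite (addrC (- ('Im c *: a2))).
- move=> _ [a1 [a2 [Aa1 Aa2 ->]]].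
  exists (adj a1), (- adj a2); split; [exact: Aadj | exact/AN/Aadj |].
  apply/matrixP => i j; rewrite !mxE rmorphD rmorphM /=.
  by rewrite conjCi mulNr mulrN.
Qed.

Lemma complexification_span x : complexification A x -> complex_span x.
Proof.
by apply; [exact: complex_span_subalgebra | exact: complex_span_real].
Qed.

Lemma complexification_sesquilinear_ext
    (G : 'M[R[i]]_n -> 'M[R[i]]_n -> 'M[R[i]]_n) :
  (forall c x y z, G (c *: x + y) z = c *: G x z + G y z) ->
  (forall c x y z, G z (c *: x + y) = c^* *: G z x + G z y) ->
  (forall a b, A a -> A b -> G a b = 0) ->
  forall a b, complexification A a -> complexification A b -> G a b = 0.
Proof.
move=> Gl Gr G0 _ _ /complexification_span [a1 [a2 [Aa1 Aa2 ->]]]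
  /complexification_span [b1 [b2 [Ab1 Ab2 ->]]].
by rewrite addrC Gl !(addrC b1) !Gr !G0 // !(scaler0, addr0).
Qed.

End Complexification.

Definition D_0 (R : realType) n N (P : 'I_N -> 'M[R[i]]_n) J Jinv
    (D : 'M[R[i]]_n) : 'M[R[i]]_n :=
  \sum_(i < N) \sum_(j < N) \sum_(k < N | i != k) Dblock P J Jinv D i j k j.

Section Jconj.
Variables (R : realType) (n : nat) (J Jinv : 'cV[R[i]]_n -> 'cV[R[i]]_n).
Hypotheses (JD : forall u v, J (u + v) = J u + J v)
  (JZ : forall (c : R[i]) v, J (c *: v) = c^* *: J v)
  (JK : cancel Jinv J) (JinvK : cancel J Jinv).
Local Notation jc := (Jconj J Jinv).
Implicit Types (c : R[i]) (X Y : 'M[R[i]]_n).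

Lemma Jconj_mulmx X v : jc X *m v = J (X *m Jinv v).
Proof.
have JinvD u w : Jinv (u + w) = Jinv u + Jinv w.
  by apply: (can_inj JinvK); rewrite JD !JK.
have JinvZ (c : R[i]) w : Jinv (c *: w) = c^* *: Jinv w.
  by apply: (can_inj JinvK); rewrite JZ conjCK !JK.
apply: mx_ofE => [u w|c w]; first by rewrite JinvD mulmxDr JD.
by rewrite JinvZ -scalemxAr JZ conjCK.
Qed.

Lemma Jconj_antilinear c X Y : jc (c *: X + Y) = c^* *: jc X + jc Y.
Proof.
apply: mulmx_cV_ext => v.
by rewrite mulmxDl -scalemxAl !Jconj_mulmx mulmxDl -scalemxAl JD JZ.
Qed.

Lemma JconjB X Y : jc (X - Y) = jc X - jc Y.
Proof. by rewrite addrC -scaleN1r Jconj_antilinear rmorphN1 scaleN1r addrC. Qed.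

Lemma Jconj0 : jc 0 = 0.
Proof. by have := JconjB 0 0; rewrite !subrr. Qed.

Lemma JconjD X Y : jc (X + Y) = jc X + jc Y.
Proof. by rewrite -[X]scale1r Jconj_antilinear conjC1 !scale1r. Qed.

Lemma Jconj_sum I r (Pr : pred I) (F : I -> 'M[R[i]]_n) :
  jc (\sum_(i <- r | Pr i) F i) = \sum_(i <- r | Pr i) jc (F i).
Proof. exact: (big_morph jc JconjD Jconj0). Qed.

Lemma JconjM X Y : jc (X * Y) = jc X * jc Y.
Proof.
apply: mulmx_cV_ext => v.
by rewrite -!mulmxE -mulmxA !Jconj_mulmx JinvK mulmxA.
Qed.

Lemma Jconj1 : jc 1 = 1.
Proof. by apply: mulmx_cV_ext => v; rewrite Jconj_mulmx !mul1mx JK. Qed.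

Lemma Jconj_comm X Y : jc (comm X Y) = comm (jc X) (jc Y).
Proof. by rewrite !commE JconjB !JconjM. Qed.

Lemma JconjK (eps : R[i]) : (forall v, J (J v) = eps *: v) -> involutive jc.
Proof.
move=> JJ X; apply: mulmx_cV_ext => v.
by rewrite !Jconj_mulmx JJ scalemxAr -JJ !JK.
Qed.

Lemma Jconj_eigen (eps' : R[i]) X :
  (forall v, J (X *m v) = eps' *: (X *m J v)) -> jc X = eps' *: X.
Proof.
by move=> JX; apply: mulmx_cV_ext => v; rewrite Jconj_mulmx JX JK scalemxAl.
Qed.

Section FirstOrderDecomposition.
Variables (A : 'M[R[i]]_n -> Prop) (D : 'M[R[i]]_n) (eps eps' : R[i]).
Variables (N : nat) (P : 'I_N -> 'M[R[i]]_n).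
Hypotheses (HA : unital_real_star_subalgebra A)
  (JJ : forall v, J (J v) = eps *: v)
  (JDe : forall v, J (D *m v) = eps' *: (D *m J v)) (eps'_neq0 : eps' != 0)
  (order_zero : forall a b, A a -> A b -> comm a (jc b) = 0)
  (HP : summand_units A P).
Local Notation AC := (complexification A).
Local Notation Q j := (jc (P j)).
Local Notation block := (Dblock P J Jinv D).

Lemma first_order_complexification X : first_order A J Jinv X ->
  forall a b, AC a -> AC b -> comm (comm X a) (jc b) = 0.
Proof.
move=> FO; apply: (complexification_sesquilinear_ext HA
  (G := fun x y => comm (comm X x) (jc y))) => // c x y z.
- by rewrite comm_linearr comm_linearl.
- by rewrite Jconj_antilinear comm_linearr.
Qed.

Lemma order_zero_complexification a b :
  AC a -> AC b -> comm a (jc b) = 0.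
Proof.
apply: (complexification_sesquilinear_ext HA
  (G := fun x y => comm x (jc y))) => // c x y z.
- exact: comm_linearl.
- by rewrite Jconj_antilinear comm_linearr.
Qed.

Let PC i : AC (P i). Proof. by case: HP. Qed.
Let PP i k : P i * P k = if i == k then P i else 0.
Proof. by case: HP => _ [_ [orth _]]; rewrite -mulmxE orth. Qed.
Let Pidem i : P i * P i = P i. Proof. by rewrite PP eqxx. Qed.
Let Porth i k : i != k -> P i * P k = 0. Proof. by rewrite PP => /negPf ->. Qed.
Let Psum : \sum_i P i = 1. Proof. by case: HP => _ [_ [_ [_ []]]]. Qed.
Let Pcentral i a : A a -> GRing.comm a (P i).
Proof.
case: HP => _ [_ [_ [_ [_ [central _]]]]] Aa.
by rewrite /GRing.comm -mulmxE central //; apply: complexification_sub.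
Qed.
Let Qidem j : Q j * Q j = Q j. Proof. by rewrite -JconjM Pidem. Qed.
Let Qorth j l : j != l -> Q j * Q l = 0.
Proof. by move=> jl; rewrite -JconjM Porth // Jconj0. Qed.
Let Qsum : \sum_j Q j = 1. Proof. by rewrite -Jconj_sum Psum Jconj1. Qed.
Let PQ i j : GRing.comm (P i) (Q j).
Proof. exact/commP/order_zero_complexification. Qed.
Let aQ a j : A a -> GRing.comm a (Q j).
Proof.
move=> Aa; apply/commP/order_zero_complexification => //.
exact: complexification_sub.
Qed.

Lemma DblockE i j k l : block i j k l = P i * Q j * D * P k * Q l.
Proof. by rewrite /Dblock mulmxE. Qed.

Lemma Dblock_decomposition :
  D = D_R P J Jinv D + D_0 P J Jinv D + D_1 P J Jinv D + D_2 P J Jinv D.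
Proof.
rewrite -{1}(sum_blocks D Psum Qsum) /D_R /D_0 /D_1 /D_2 /Dblock mulmxE.
rewrite -!big_split; apply: eq_bigr => i _; rewrite -!big_split.
by apply: eq_bigr => j _; apply: sum_pair_D1.
Qed.

Lemma Dblock_offdiag i j k l : i != k -> j != l ->
  block i j k l = P i * Q j * comm (comm D (P k)) (Q l) * P k * Q l.
Proof.
move=> ik jl; rewrite DblockE !commE.
by apply: offdiag_block; rewrite ?Pidem ?Qidem ?Porth ?Qorth //; apply/commr_sym.
Qed.

Lemma D_2_eq0 : first_order A J Jinv D -> D_2 P J Jinv D = 0.
Proof.
move=> FO; apply: big1 => i _; apply: big1 => j _.
apply: big1 => k ik; apply: big1 => l jl.
rewrite Dblock_offdiag // (first_order_complexification FO (PC k) (PC l)).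
by rewrite mulr0 !mul0r.
Qed.

Lemma comm_Dblock_diag i j l a : j != l -> A a ->
  comm (block i j i l) a = P i * Q j * comm (comm D a) (Q l) * P i * Q l.
Proof.
move=> jl Aa; rewrite DblockE !commE.
apply: diag_block_commutator; rewrite ?Qidem ?Qorth //.
- exact/commr_sym/PQ.
- exact: Pcentral.
- exact: aQ.
- exact: aQ.
Qed.

Lemma D_1_commute : first_order A J Jinv D ->
  forall a, A a -> comm (D_1 P J Jinv D) a = 0.
Proof.
move=> FO a Aa; apply/commP/commr_sym.
apply: commr_sum => i _; apply: commr_sum => j _; apply: commr_sum => l jl.
apply/commr_sym/commP; rewrite comm_Dblock_diag //.
have AC_a := complexification_sub Aa.
by rewrite (first_order_complexification FO AC_a (PC l)) mulr0 !mul0r.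
Qed.

Lemma Jconj_Dblock i j k l : jc (block i j k l) = eps' *: block j i l k.
Proof.
rewrite !DblockE !JconjM !(JconjK JJ) (Jconj_eigen JDe).
rewrite -scalerAr_mx -!scalerAl_mx (PQ j i).
by rewrite -(mulrA _ (P l)) (PQ l k) mulrA.
Qed.

Lemma Jconj_D_1 : jc (D_1 P J Jinv D) = eps' *: D_0 P J Jinv D.
Proof.
rewrite /D_1 /D_0 [in RHS]exchange_big Jconj_sum scaler_sumr.
apply: eq_bigr => i _.
rewrite Jconj_sum scaler_sumr; apply: eq_bigr => j _.
by rewrite Jconj_sum scaler_sumr; apply: eq_bigr => l _; apply: Jconj_Dblock.
Qed.

Lemma D_0_commute_Jconj : (forall a, A a -> comm (D_1 P J Jinv D) a = 0) ->
  forall b, A b -> comm (D_0 P J Jinv D) (jc b) = 0.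
Proof.
move=> D1c b Ab; have := congr1 jc (D1c b Ab).
rewrite Jconj_comm Jconj_D_1 Jconj0 !commE.
rewrite -scalerAl_mx -scalerAr_mx -scalerBr.
by move/eqP; rewrite scaler_eq0 (negPf eps'_neq0) => /eqP.
Qed.

Lemma first_order_commute_Jconj X : (forall b, A b -> comm X (jc b) = 0) ->
  first_order A J Jinv X.
Proof.
move=> Xc a b Aa Ab; apply/commP/commr_sym; rewrite commE.
have bX : GRing.comm (jc b) X by apply/commr_sym/commP/Xc.
have ba : GRing.comm (jc b) a by apply/commr_sym/commP/order_zero.
by apply: commrB; apply: commrM.
Qed.

Lemma first_order_iff_blocks : first_order A J Jinv D <->
  [/\ D_2 P J Jinv D = 0, (forall a, A a -> comm (D_1 P J Jinv D) a = 0)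
    & first_order A J Jinv (D_R P J Jinv D)].
Proof.
have reduce_to_D_R : D_2 P J Jinv D = 0 ->
    (forall a, A a -> comm (D_1 P J Jinv D) a = 0) ->
    first_order A J Jinv D <-> first_order A J Jinv (D_R P J Jinv D).
  move=> D2 D1c; rewrite {1}Dblock_decomposition D2 addr0 -addrA.
  apply: first_order_addr; apply/first_order_addr.
    exact/first_order_commute/D1c.
  exact/first_order_commute_Jconj/D_0_commute_Jconj.
split=> [FO | [D2 D1c FOR]]; last exact: (reduce_to_D_R D2 D1c).2 FOR.
have D2 := D_2_eq0 FO; have D1c := D_1_commute FO.
by split; last exact: (reduce_to_D_R D2 D1c).1 FO.
Qed.

End FirstOrderDecomposition.
End Jconj.

Unset Implicit Arguments.

Theorem proposition6 (R : realType) (n : nat)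
  (A : 'M[R[i]]_n -> Prop) (D : 'M[R[i]]_n)
  (J Jinv : 'cV[R[i]]_n -> 'cV[R[i]]_n) (eps eps' : R[i])
  (N : nat) (P : 'I_N -> 'M[R[i]]_n) :
  unital_real_star_subalgebra A ->
  adj D = D ->
  antilinear_isometry J ->
  (forall v, J (Jinv v) = v) -> (forall v, Jinv (J v) = v) ->
  (eps = 1 \/ eps = -1) -> (eps' = 1 \/ eps' = -1) ->
  (forall v, J (J v) = eps *: v) ->
  (forall v, J (D *m v) = eps' *: (D *m J v)) ->
  (forall a b, A a -> A b -> comm a (Jconj J Jinv b) = 0) ->
  summand_units A P ->
  (first_order A J Jinv D <->
     [/\ D_2 P J Jinv D = 0,
         (forall a, A a -> comm (D_1 P J Jinv D) a = 0)
       & first_order A J Jinv (D_R P J Jinv D)]).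
Proof.
move=> HA _ [JD [JZ _]] JK JinvK _ eps'_sign JJ JDe order_zero HP.
have eps'_neq0 : eps' != 0.
  by case: eps'_sign => ->; rewrite ?oppr_eq0 oner_eq0.
exact: (first_order_iff_blocks JD JZ JK JinvK HA JJ JDe eps'_neq0 order_zero HP).
Qed.
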